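(* Let $\mathcal{X}=\{x\in\mathbb{R}^n:\|x\|_2\le1\}$, $\mathcal{Y}=\{1,\dots,|\mathcal{Y}|\}$, $K\ge1$, $N\ge1$ and $\alpha>0$. Consider the neural networks $h_{\mathbf{w}}(x)=W h^K(\cdots h^1(x))+b$ with $W\in\mathbb{R}^{|\mathcal{Y}|\times N}$, $b\in\mathbb{R}^{|\mathcal{Y}|}$, and layers $h^i(u)=\mathrm{proj}(\mathrm{leaky}(W_iu+b_i))$ where $W_1\in\mathbb{R}^{N\times n}$, $W_i\in\mathbb{R}^{N\times N}$ for $i\ge2$, $b_i\in\mathbb{R}^N$; here $\mathrm{leaky}$ is the Leaky ReLU $t\mapsto\max(t,at)$ (with a fixed slope $a\in(0,1)$) applied elementwise and $\mathrm{proj}$ is the Euclidean projection onto the closed unit $\ell_2$-ball of $\mathbb{R}^N$. Let $\mathbf{w}$ denote the vector concatenating all entries of $W,W_K,\dots,W_1,b,b_K,\dots,b_1$. Let the loss be $\ell(h,(x,y))=\frac{1}{|\mathcal{Y}|}\sum_{y'\ne y}\max\big(0,1-\alpha(h(x)[y]-h(x)[y'])\big)$, where $h(x)[y]$ denotes the $y$-th coordinate. Then for all parameter vectors $\mathbf{w},\mathbf{w}'$ such that every weight matrix ($W,W_1,\dots,W_K$ in both) has Frobenius norm at most $1$ (no constraint on biases), and for all $(x,y)\in\mathcal{X}\times\mathcal{Y}$, \[ |\ell(h_{\mathbf{w}},(x,y))-\ell(h_{\mathbf{w}'},(x,y))|\le\alpha\sqrt{2(K+2)}\,\|\mathbf{w}-\mathbf{w}'\|_2.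 \] *)

From HB Require Import structures.
From mathcomp Require Import all_boot all_order all_algebra.
From mathcomp Require Import reals.
Set Implicit Arguments. Unset Strict Implicit. Unset Printing Implicit Defensive.
Import Order.TTheory GRing.Theory Num.Theory.
Local Open Scope ring_scope.

Section Defs.
Variable R : realType.

Definition vnorm d (v : 'cV[R]_d) : R := Num.sqrt (\sum_(i < d) v i 0 ^+ 2).

Definition frob p q (A : 'M[R]_(p, q)) : R :=
  Num.sqrt (\sum_(i < p) \sum_(j < q) A i j ^+ 2).

Definition leaky (a t : R) : R := Num.max t (a * t).
Definition leakyv d (a : R) (v : 'cV[R]_d) : 'cV[R]_d := \col_i leaky a (v i 0).

Definition proj d (v : 'cV[R]_d) : 'cV[R]_d :=
  if vnorm v <= 1 then v else (vnorm v)^-1 *: v.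

Definition layer p q (a : R) (Wi : 'M[R]_(p, q)) (bi : 'cV[R]_p) (u : 'cV[R]_q)
  : 'cV[R]_p := proj (leakyv a (Wi *m u + bi)).

(* Parameters of a network with input dimension n, width N, m labels and
   K = k.+1 hidden layers: W, b (output), W1, b1 (first layer) and
   Wh i, bh i (the layer number i+2, for i < k). *)
Record params (m N n k : nat) := Params {
  pW  : 'M[R]_(m, N);
  pb  : 'cV[R]_m;
  pW1 : 'M[R]_(N, n);
  pb1 : 'cV[R]_N;
  pWh : 'I_k -> 'M[R]_N;
  pbh : 'I_k -> 'cV[R]_N }.

Definition net m N n k (a : R) (w : params m N n k) (x : 'cV[R]_n) : 'cV[R]_m :=
  let u1 := layer a (pW1 w) (pb1 w) x in
  let uK := foldl (fun u (i : 'I_k) => layer a (pWh w i) (pbh w i) u) u1 (enum 'I_k) in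
  pW w *m uK + pb w.

Definition loss m (alpha : R) (hx : 'cV[R]_m) (y : 'I_m) : R :=
  (m%:R)^-1 * \sum_(y' < m | y' != y) Num.max 0 (1 - alpha * (hx y 0 - hx y' 0)).

Definition pdist2 m N n k (w w' : params m N n k) : R :=
  \sum_(i < m) \sum_(j < N) (pW w i j - pW w' i j) ^+ 2
  + \sum_(i < N) \sum_(j < n) (pW1 w i j - pW1 w' i j) ^+ 2
  + \sum_(l < k) \sum_(i < N) \sum_(j < N) (pWh w l i j - pWh w' l i j) ^+ 2
  + \sum_(i < m) (pb w i 0 - pb w' i 0) ^+ 2
  + \sum_(i < N) (pb1 w i 0 - pb1 w' i 0) ^+ 2
  + \sum_(l < k) \sum_(i < N) (pbh w l i 0 - pbh w' l i 0) ^+ 2.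

Definition pdist m N n k (w w' : params m N n k) : R := Num.sqrt (pdist2 w w').

Definition weights_bounded m N n k (w : params m N n k) : Prop :=
  frob (pW w) <= 1 /\ frob (pW1 w) <= 1 /\ forall l : 'I_k, frob (pWh w l) <= 1.

End Defs.

(* The hinge loss is alpha-Lipschitz in the network output: each term moves by at
   most alpha (|d_y| + |d_y'|), and Cauchy-Schwarz bounds the sum of these terms by
   |Y| |d|. Leaky ReLU with slope in [0, 1] and the projection onto the unit ball are
   nonexpansive, every layer input lies in the unit ball, and
   W u - W' u' = (W - W') u + W' (u - u') with |W'|_F <= 1; so changing the parameters
   of one affine map moves the output by at most |W - W'|_F + |b - b'|. Summing over
   the K + 1 affine maps bounds the output change by 2 (K + 1) parameter gaps, whose
   sum Cauchy-Schwarz bounds by sqrt (2 (K + 1)) |w - w'|, slightly better than the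
   stated constant. Only w' needs bounded weights. *)

From HB Require Import structures.
From mathcomp Require Import all_boot all_order all_algebra.
From mathcomp Require Import reals.
From mathcomp Require Import ring lra.
Set Implicit Arguments. Unset Strict Implicit. Unset Printing Implicit Defensive.
Import Order.TTheory GRing.Theory Num.Theory.
Local Open Scope ring_scope.

Section Euclid.
Variable R : realType.

Lemma CauchySchwarz_sum (I : finType) (a b : I -> R) :
  (\sum_i a i * b i) ^+ 2 <= (\sum_i a i ^+ 2) * (\sum_i b i ^+ 2).
Proof.
set A := \sum_i a i ^+ 2; set B := \sum_i b i ^+ 2; set C := \sum_i a i * b i.
have lagrange : A * B + B * A - 2 * (C * C) =
    \sum_i \sum_j (a i * b j - a j * b i) ^+ 2.
  rewrite /A /B /C !mulr_suml mulr_sumr -big_split -sumrB.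
  apply: eq_bigr => i _; rewrite !mulr_sumr -!big_split -sumrB.
  by apply: eq_bigr => j _ /=; ring.
have : 0 <= \sum_i \sum_j (a i * b j - a j * b i) ^+ 2.
  by do 2![apply: sumr_ge0 => ? _]; apply: sqr_ge0.
rewrite -lagrange expr2; lra.
Qed.

Lemma sum_le_sqrt_size (s : seq R) :
  \sum_(x <- s) x <= Num.sqrt (size s)%:R * Num.sqrt (\sum_(x <- s) x ^+ 2).
Proof.
rewrite -sqrtrM ?ler0n // (big_nth 0) [X in _ * X](big_nth 0) !big_mkord.
apply: le_trans (ler_norm _) _; rewrite -sqrtr_sqr ler_sqrt; last first.
  by rewrite mulr_ge0 ?ler0n ?sumr_ge0 // => i _; apply: sqr_ge0.
have := CauchySchwarz_sum (fun i : 'I_(size s) => s`_i) (fun _ => 1).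
under eq_bigr do rewrite mulr1.
under [\sum_i 1 ^+ 2]eq_bigr do rewrite expr1n.
by rewrite sumr_const card_ord mulrC.
Qed.

Definition vdot d (u v : 'cV[R]_d) : R := \sum_i u i 0 * v i 0.

Lemma vnorm_ge0 d (u : 'cV[R]_d) : 0 <= vnorm u.
Proof. exact: sqrtr_ge0. Qed.

Lemma vnorm0 d : vnorm (0 : 'cV[R]_d) = 0.
Proof. by rewrite /vnorm big1 ?sqrtr0 // => i _; rewrite mxE expr0n. Qed.

Lemma vnorm_sqr d (u : 'cV[R]_d) : vnorm u ^+ 2 = \sum_i u i 0 ^+ 2.
Proof. by rewrite sqr_sqrtr // sumr_ge0 // => i _; apply: sqr_ge0. Qed.

Lemma frob_ge0 p q (A : 'M[R]_(p, q)) : 0 <= frob A.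
Proof. exact: sqrtr_ge0. Qed.

Lemma frob_sqr p q (A : 'M[R]_(p, q)) : frob A ^+ 2 = \sum_i \sum_j A i j ^+ 2.
Proof.
by rewrite sqr_sqrtr // sumr_ge0 // => i _; rewrite sumr_ge0 // => j _; apply: sqr_ge0.
Qed.

Lemma vdot_le d (u v : 'cV[R]_d) : vdot u v <= vnorm u * vnorm v.
Proof.
have := CauchySchwarz_sum (fun i => u i 0) (fun i => v i 0).
rewrite -!vnorm_sqr -exprMn -/(vdot u v).
have := mulr_ge0 (vnorm_ge0 u) (vnorm_ge0 v); nra.
Qed.

Lemma vdotZl d c (u v : 'cV[R]_d) : vdot (c *: u) v = c * vdot u v.
Proof. by rewrite /vdot mulr_sumr; apply: eq_bigr => i _; rewrite mxE mulrA. Qed.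

Lemma vdotZr d c (u v : 'cV[R]_d) : vdot u (c *: v) = c * vdot u v.
Proof. by rewrite /vdot mulr_sumr; apply: eq_bigr => i _; rewrite mxE mulrCA. Qed.

Lemma vnormD_sqr d (u v : 'cV[R]_d) :
  vnorm (u + v) ^+ 2 = vnorm u ^+ 2 + vnorm v ^+ 2 + 2 * vdot u v.
Proof.
rewrite !vnorm_sqr /vdot mulr_sumr -!big_split.
by apply: eq_bigr => i _; rewrite !mxE /=; ring.
Qed.

Lemma vnormB_sqr d (u v : 'cV[R]_d) :
  vnorm (u - v) ^+ 2 = vnorm u ^+ 2 + vnorm v ^+ 2 - 2 * vdot u v.
Proof.
rewrite !vnorm_sqr /vdot mulr_sumr -big_split -sumrB.
by apply: eq_bigr => i _; rewrite !mxE /=; ring.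
Qed.

Lemma vnormD d (u v : 'cV[R]_d) : vnorm (u + v) <= vnorm u + vnorm v.
Proof.
rewrite -ler_sqr ?nnegrE ?addr_ge0 ?vnorm_ge0 // vnormD_sqr.
have := vdot_le u v; lra.
Qed.

Lemma vnormZ d c (u : 'cV[R]_d) : vnorm (c *: u) = `|c| * vnorm u.
Proof.
rewrite /vnorm -sqrtr_sqr -sqrtrM ?sqr_ge0 // mulr_sumr.
by congr Num.sqrt; apply: eq_bigr => i _; rewrite mxE exprMn.
Qed.

Lemma vnorm_mulmx p q (A : 'M[R]_(p, q)) (u : 'cV[R]_q) :
  vnorm (A *m u) <= frob A * vnorm u.
Proof.
rewrite -ler_sqr ?nnegrE ?mulr_ge0 ?frob_ge0 ?vnorm_ge0 //.
rewrite exprMn frob_sqr !vnorm_sqr mulr_suml; apply: ler_sum => i _.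
by rewrite mxE; apply: CauchySchwarz_sum.
Qed.

End Euclid.

Section Layers.
Variable R : realType.

Lemma leakyE (a t : R) : a <= 1 -> leaky a t = if 0 <= t then t else a * t.
Proof.
move=> a1; rewrite /leaky maxEle; case: (leP t (a * t)) => h1; case: (leP 0 t) => h2 //.
- by apply/eqP; rewrite eq_le h1 andbT; nra.
- nra.
Qed.

Lemma leaky_lip (a s t : R) : 0 <= a -> a <= 1 ->
  `|leaky a s - leaky a t| <= `|s - t|.
Proof.
move=> a0 a1; rewrite !leakyE //.
case: (leP 0 s) => s0; case: (leP 0 t) => t0 //.
- by rewrite !ger0_norm; nra.
- by rewrite !ler0_norm; nra.
- by rewrite -mulrBr normrM ger0_norm //; apply: ler_piMl.
Qed.

Lemma leakyv_lip d (a : R) (u v : 'cV[R]_d) : 0 <= a -> a <= 1 ->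
  vnorm (leakyv a u - leakyv a v) <= vnorm (u - v).
Proof.
move=> a0 a1; rewrite /vnorm ler_sqrt; last first.
  by rewrite sumr_ge0 // => i _; apply: sqr_ge0.
apply: ler_sum => i _; rewrite !mxE.
rewrite -[X in X <= _]real_normK ?num_real // -[X in _ <= X]real_normK ?num_real //.
by rewrite ler_sqr ?nnegrE ?normr_ge0 ?leaky_lip.
Qed.

Definition proj_scale d (u : 'cV[R]_d) : R :=
  if vnorm u <= 1 then 1 else (vnorm u)^-1.

Lemma projE d (u : 'cV[R]_d) : proj u = proj_scale u *: u.
Proof. by rewrite /proj /proj_scale; case: ifP; rewrite ?scale1r. Qed.

Lemma proj_scale_ge0 d (u : 'cV[R]_d) : 0 <= proj_scale u.
Proof. by rewrite /proj_scale; case: ifP; rewrite ?invr_ge0 ?vnorm_ge0. Qed.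

Lemma proj_scale_le1 d (u : 'cV[R]_d) : proj_scale u <= 1.
Proof.
rewrite /proj_scale; case: ifP => // /negbT; rewrite -ltNge => u1.
by rewrite invf_le1 ?ltW // (lt_trans ltr01 u1).
Qed.

Lemma vnorm_proj d (u : 'cV[R]_d) : vnorm (proj u) = Num.min (vnorm u) 1.
Proof.
rewrite projE vnormZ ger0_norm ?proj_scale_ge0 // /proj_scale minEle.
case: ifP => [_|/negbT]; first by rewrite mul1r.
by rewrite -ltNge => u1; rewrite mulVf // gt_eqF // (lt_trans ltr01 u1).
Qed.

Lemma vnorm_proj_le1 d (u : 'cV[R]_d) : vnorm (proj u) <= 1.
Proof. by rewrite vnorm_proj ge_min lexx orbT. Qed.

(* With proj u = c1 *: u and proj v = c2 *: v, the gap |u - v|^2 - |proj u - proj v|^2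
   is ((|u| - |v|)^2 - (c1 |u| - c2 |v|)^2) + 2 (1 - c1 c2) (|u| |v| - <u, v>),
   a sum of two nonnegative terms since c |u| = min |u| 1. *)
Lemma proj_lip d (u v : 'cV[R]_d) : vnorm (proj u - proj v) <= vnorm (u - v).
Proof.
have min_lip :
    (Num.min (vnorm u) 1 - Num.min (vnorm v) 1) ^+ 2 <= (vnorm u - vnorm v) ^+ 2.
  rewrite !minEle; have := sqr_ge0 (vnorm u - vnorm v).
  by case: (leP (vnorm u) 1) => ?; case: (leP (vnorm v) 1) => ? /=; nra.
rewrite -!vnorm_proj !projE !vnormZ !ger0_norm ?proj_scale_ge0 // in min_lip.
rewrite -ler_sqr ?nnegrE ?vnorm_ge0 // !projE !vnormB_sqr !vnormZ vdotZl vdotZr.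
rewrite !ger0_norm ?proj_scale_ge0 //.
have c12 : 0 <= 1 - proj_scale u * proj_scale v.
  by rewrite subr_ge0 mulr_ile1 ?proj_scale_ge0 ?proj_scale_le1.
have cs : 0 <= vnorm u * vnorm v - vdot u v by rewrite subr_ge0 vdot_le.
have := mulr_ge0 c12 cs; lra.
Qed.

Lemma affine_lip p q (W W' : 'M[R]_(p, q)) (b b' : 'cV[R]_p) (u u' : 'cV[R]_q) :
  vnorm u <= 1 -> frob W' <= 1 ->
  vnorm ((W *m u + b) - (W' *m u' + b'))
    <= frob (W - W') + vnorm (b - b') + vnorm (u - u').
Proof.
move=> u1 W'1.
have -> : (W *m u + b) - (W' *m u' + b') = (W - W') *m u + (b - b') + W' *m (u - u').
  by rewrite mulmxBl mulmxBr; apply/matrixP => i j; rewrite !mxE; ring.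
apply: le_trans (vnormD _ _) _; apply: lerD; last first.
  by apply: le_trans (vnorm_mulmx _ _) _; apply: ler_piMl; rewrite ?vnorm_ge0.
apply: le_trans (vnormD _ _) _; rewrite lerD2r.
by apply: le_trans (vnorm_mulmx _ _) _; apply: ler_piMr; rewrite ?frob_ge0.
Qed.

Lemma layer_lip p q (a : R) (W W' : 'M[R]_(p, q)) (b b' : 'cV[R]_p) (u u' : 'cV[R]_q) :
  0 <= a -> a <= 1 -> vnorm u <= 1 -> frob W' <= 1 ->
  vnorm (layer a W b u - layer a W' b' u')
    <= frob (W - W') + vnorm (b - b') + vnorm (u - u').
Proof.
move=> a0 a1 u1 W'1; apply: le_trans (proj_lip _ _) _.
by apply: le_trans (leakyv_lip _ _ a0 a1) _; apply: affine_lip.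
Qed.

Lemma vnorm_layer_le1 p q (a : R) (W : 'M[R]_(p, q)) b u : vnorm (layer a W b u) <= 1.
Proof. exact: vnorm_proj_le1. Qed.

Section Stack.
Variables (I : Type) (N : nat) (a : R) (Wf Wf' : I -> 'M[R]_N) (bf bf' : I -> 'cV[R]_N).

Lemma vnorm_stack_le1 s u :
  vnorm u <= 1 -> vnorm (foldl (fun u i => layer a (Wf i) (bf i) u) u s) <= 1.
Proof. by elim: s u => [|i s IHs] u u1 //=; apply/IHs/vnorm_layer_le1. Qed.

Lemma stack_lip s u u' : 0 <= a -> a <= 1 -> (forall i, frob (Wf' i) <= 1) ->
  vnorm u <= 1 ->
  vnorm (foldl (fun u i => layer a (Wf i) (bf i) u) u s
         - foldl (fun u i => layer a (Wf' i) (bf' i) u) u' s)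
    <= \sum_(i <- s) (frob (Wf i - Wf' i) + vnorm (bf i - bf' i)) + vnorm (u - u').
Proof.
move=> a0 a1 W'1; elim: s u u' => [|i s IHs] u u' u1 /=; first by rewrite big_nil add0r.
apply: le_trans (IHs _ _ (vnorm_layer_le1 _ _ _ _)) _.
by rewrite big_cons [_ + \sum_(j <- s) _]addrC -addrA lerD2l; apply: layer_lip.
Qed.
End Stack.
End Layers.

Section Network.
Variables (R : realType) (m N n k : nat).
Implicit Types (w : params R m N n k).

Definition param_gaps w w' : seq R :=
  [:: frob (pW w - pW w'); vnorm (pb w - pb w');
      frob (pW1 w - pW1 w'); vnorm (pb1 w - pb1 w')]
  ++ [seq frob (pWh w l - pWh w' l) | l <- enum 'I_k]
  ++ [seq vnorm (pbh w l - pbh w' l) | l <- enum 'I_k].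

Lemma size_param_gaps w w' : size (param_gaps w w') = (2 * k.+2)%N.
Proof.
by rewrite !size_cat !size_map -enumT size_enum_ord !mulnS mul2n -addnn addnA.
Qed.

Lemma pdist2E w w' : pdist2 w w' = \sum_(g <- param_gaps w w') g ^+ 2.
Proof.
have eW p q (A B : 'M[R]_(p, q)) : frob (A - B) ^+ 2 = \sum_i \sum_j (A i j - B i j) ^+ 2.
  by rewrite frob_sqr; apply: eq_bigr => i _; apply: eq_bigr => j _; rewrite !mxE.
have eb p (u v : 'cV[R]_p) : vnorm (u - v) ^+ 2 = \sum_i (u i 0 - v i 0) ^+ 2.
  by rewrite vnorm_sqr; apply: eq_bigr => i _; rewrite !mxE.
have eK (F : 'I_k -> R) : \sum_(l in 'I_k) F l = \sum_(l < k) F l by [].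
rewrite !big_cat !big_map -enumT !big_enum !eK /= !big_cons big_nil addr0 /pdist2.
rewrite !eW !eb (eq_bigr _ (fun l _ => eW _ _ _ _)) (eq_bigr _ (fun l _ => eb _ _ _)).
lra.
Qed.

Lemma net_lip (a : R) w w' x : 0 <= a -> a <= 1 -> weights_bounded w' ->
  vnorm x <= 1 -> vnorm (net a w x - net a w' x) <= \sum_(g <- param_gaps w w') g.
Proof.
move=> a0 a1 [W'1 [W1'1 Wh'1]] x1; rewrite /net /=.
set u1 := layer a (pW1 w) (pb1 w) x; set u1' := layer a (pW1 w') (pb1 w') x.
have first_lip : vnorm (u1 - u1') <= frob (pW1 w - pW1 w') + vnorm (pb1 w - pb1 w').
  by rewrite -[X in _ <= X]addr0 -(vnorm0 R n) -(subrr x); apply: layer_lip.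
have hidden_lip := stack_lip (pWh w) (pbh w) (pbh w') (enum 'I_k) u1' a0 a1 Wh'1
  (vnorm_layer_le1 _ _ _ _ : vnorm u1 <= 1).
apply: le_trans (affine_lip (pW w) (pb w) (pb w') _ _ W'1) _.
  exact/vnorm_stack_le1/vnorm_layer_le1.
rewrite big_split /= in hidden_lip.
rewrite !big_cat !big_map !big_cons big_nil -enumT /=.
lra.
Qed.

End Network.

Section Loss.
Variable R : realType.

Lemma hinge_lip (al p q : R) : 0 <= al ->
  `|Num.max 0 (1 - al * p) - Num.max 0 (1 - al * q)| <= al * `|p - q|.
Proof.
move=> al0; have pq : p - q <= `|p - q| := ler_norm _.
have qp : q - p <= `|p - q| by rewrite distrC ler_norm.
have al_pq := mulr_ge0 al0 (normr_ge0 (p - q)).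
rewrite !maxEle; case: (leP 0 (1 - al * p)) => ?; case: (leP 0 (1 - al * q)) => ?.
all: by rewrite ler_norml; apply/andP; split; nra.
Qed.

Lemma sum_offdiag_le m (d : 'I_m -> R) (y : 'I_m) :
  \sum_(i | i != y) (`|d y| + `|d i|) <= m%:R * Num.sqrt (\sum_i d i ^+ 2).
Proof.
case: m d y => [|n] d y; first by case: y.
(* Cauchy-Schwarz against the weights c, whose squared norm is n^2 + n <= (n + 1)^2. *)
pose c (i : 'I_n.+1) : R := if i == y then n%:R else 1.
have -> : \sum_(i | i != y) (`|d y| + `|d i|) = \sum_i c i * `|d i|.
  rewrite [RHS](bigD1 y) //= /c eqxx mulr_natl big_split /= sumr_const cardC1 card_ord.
  by congr (_ + _); apply: eq_bigr => i /negbTE ->; rewrite mul1r.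
have c_sqr : \sum_i c i ^+ 2 <= n.+1%:R ^+ 2.
  rewrite (bigD1 y) //= /c eqxx (eq_bigr (fun _ => 1)) => [|i /negbTE ->]; last first.
    by rewrite expr1n.
  rewrite sumr_const cardC1 card_ord -natr1; have := ler0n R n; nra.
have d_sqr : \sum_i `|d i| ^+ 2 = Num.sqrt (\sum_i d i ^+ 2) ^+ 2.
  rewrite sqr_sqrtr ?sumr_ge0 // => [|i _]; last exact: sqr_ge0.
  by apply: eq_bigr => i _; rewrite real_normK ?num_real.
have := CauchySchwarz_sum c (fun i => `|d i|); rewrite d_sqr => cs.
have S0 : 0 <= \sum_i c i * `|d i|.
  by rewrite sumr_ge0 // => i _; rewrite mulr_ge0 // /c; case: ifP.
rewrite -ler_sqr ?nnegrE ?mulr_ge0 ?sqrtr_ge0 // exprMn.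
exact: le_trans cs (ler_wpM2r (sqr_ge0 _) c_sqr).
Qed.

Lemma loss_lip m (al : R) (h h' : 'cV[R]_m) (y : 'I_m) : 0 <= al ->
  `|loss al h y - loss al h' y| <= al * vnorm (h - h').
Proof.
move=> al0; pose d i : R := (h - h') i 0.
apply: (@le_trans _ _ (m%:R^-1 * (al * \sum_(i | i != y) (`|d y| + `|d i|)))).
  rewrite /loss -mulrBr -sumrB normrM ger0_norm ?invr_ge0 ?ler0n //.
  apply: ler_wpM2l; first by rewrite invr_ge0 ler0n.
  rewrite mulr_sumr.
  apply: le_trans (ler_norm_sum _ _ _) _; apply: ler_sum => i _.
  apply: le_trans (hinge_lip _ _ al0) _; apply: ler_wpM2l => //; rewrite /d !mxE.
  have -> : h y 0 - h i 0 - (h' y 0 - h' i 0) = (h y 0 - h' y 0) - (h i 0 - h' i 0).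
    by ring.
  exact: ler_normB.
have m_gt0 : (0 < m)%N := leq_ltn_trans (leq0n y) (ltn_ord y).
rewrite mulrCA; apply: ler_wpM2l => //; rewrite ler_pdivrMl ?ltr0n //.
exact: sum_offdiag_le.
Qed.
End Loss.

Theorem lemmaD1 (R : realType) (n N m k : nat) (a alpha : R)
    (hN : (1 <= N)%N) (ha0 : 0 < a) (ha1 : a < 1) (halpha : 0 < alpha)
    (w w' : params R m N n k)
    (hw : weights_bounded w) (hw' : weights_bounded w')
    (x : 'cV[R]_n) (hx : vnorm x <= 1) (y : 'I_m) :
  `| loss alpha (net a w x) y - loss alpha (net a w' x) y |
    <= alpha * Num.sqrt (2 * (k.+1 + 2)%:R) * pdist w w'.
Proof.
apply: le_trans (loss_lip _ _ _ (ltW halpha)) _.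
rewrite -mulrA ler_pM2l //.
apply: le_trans (net_lip w (ltW ha0) (ltW ha1) hw' hx) _.
apply: le_trans (sum_le_sqrt_size _) _.
rewrite size_param_gaps -pdist2E; apply: ler_wpM2r; first exact: sqrtr_ge0.
by rewrite ler_sqrt ?mulr_ge0 ?ler0n // natrM ler_pM2l ?ltr0n // ler_nat addn2.
Qed.
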